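(* Let $(C,F)$ be an antler in an undirected multigraph $G$, and let $G':=G-(C\cup F)$ and $S:=C$. Then (i) for every minimum feedback vertex set $S'$ of $G'$, the set $S\cup S'$ is a minimum feedback vertex set of $G$; and (ii) for every integer $z\ge0$ and every $z$-antler $(\hat C,\hat F)$ in $G$, there exists a $z$-antler $(C',F')$ in $G'$ with $C'\cup F'=(\hat C\cup\hat F)\cap V(G')$ and $|C'|=|\hat C|-|(\hat C\cup\hat F)\cap S|$.
   Context: A feedback vertex set (FVS) of $G$ is a set $X\subseteq V(G)$ with $G-X$ acyclic (self-loops and pairs of parallel edges count as cycles); $\mathrm{fvs}(G)$ is its minimum size. For disjoint $X,Y$, $e(X,Y)$ is the number of edges between $X$ and $Y$. A feedback vertex cut (FVC) in $G$ is a pair of disjoint sets $C,F\subseteq V(G)$ such that $G[F]$ is a forest and every tree $T$ of $G[F]$ satisfies $e(V(T),V(G)\setminus(C\cup F))\le1$. An antler is a FVC $(C,F)$ with $|C|\le\mathrm{fvs}(G[C\cup F])$. For $C\subseteq V(G)$, a $C$-certificate is a subgraph $H$ of $G$ such that $C$ is a minimum FVS of $H$; it has order $z$ if every component $H'$ of $H$ satisfies $\mathrm{fvs}(H')=|C\cap V(H')|\le z$. A $z$-antler is an antler $(C,F)$ such that $G[C\cup F]$ contains a $C$-certificate of order $z$. *)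

(* Undirected multigraphs on a finite vertex type V,
   given by an edge-multiplicity function m : V -> V -> nat
   (m x y = number of edges between x and y, m x x = number of self-loops).
   A (sub)graph is described by a vertex set W together with m; only edges
   between vertices of W are considered (induced subgraph G[W]). *)
From mathcomp Require Import all_boot.
Set Implicit Arguments. Unset Strict Implicit. Unset Printing Implicit Defensive.

Section Multigraph.
Variable V : finType.
Implicit Types (m : V -> V -> nat) (W X Y : {set V}).

Definition has_cycle m X : Prop :=
  (exists2 x, x \in X & 0 < m x x) \/
  (exists x y, [/\ x \in X, y \in X, x != y & 2 <= m x y]) \/
  (exists s : seq V, [/\ 3 <= size s, uniq s, all (fun x => x \in X) s &
                        cycle (fun x y => 0 < m x y) s]).

Definition acyclic m X : Prop := ~ has_cycle m X.

Definition is_fvs m W X : Prop := X \subset W /\ acyclic m (W :\: X).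

Definition is_min_fvs m W X : Prop :=
  is_fvs m W X /\ forall Y, is_fvs m W Y -> #|X| <= #|Y|.

Definition fvs_eq m W (k : nat) : Prop :=
  (exists X, is_fvs m W X /\ #|X| = k) /\ forall X, is_fvs m W X -> k <= #|X|.

Definition e_between m X Y : nat := \sum_(x in X) \sum_(y in Y) m x y.

Definition adjW m W : rel V := fun x y => [&& x \in W, y \in W & 0 < m x y].
Definition comp m W x : {set V} := [set y | connect (adjW m W) x y].

Definition fvc m W (C F : {set V}) : Prop :=
  [/\ C \subset W, F \subset W, [disjoint C & F], acyclic m F &
      forall x, x \in F -> e_between m (comp m F x) (W :\: (C :|: F)) <= 1].

Definition antler m W (C F : {set V}) : Prop :=
  fvc m W C F /\ forall X, is_fvs m (C :|: F) X -> #|C| <= #|X|.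

Definition subgraph mH (VH : {set V}) m W : Prop :=
  [/\ VH \subset W, forall x y, mH x y = mH y x,
      forall x y, mH x y <= m x y &
      forall x y, 0 < mH x y -> x \in VH /\ y \in VH].

Definition certificate mH (VH : {set V}) (C : {set V}) : Prop :=
  C \subset VH /\ is_min_fvs mH VH C.

Definition cert_order mH (VH : {set V}) (C : {set V}) (z : nat) : Prop :=
  forall x, x \in VH ->
    fvs_eq mH (comp mH VH x) #|C :&: comp mH VH x| /\ #|C :&: comp mH VH x| <= z.

Definition z_antler m W (z : nat) (C F : {set V}) : Prop :=
  antler m W C F /\
  exists (mH : V -> V -> nat) (VH : {set V}),
    [/\ subgraph mH VH m (C :|: F), certificate mH VH C & cert_order mH VH C z].

End Multigraph.

(* In a feedback vertex cut (C, F) no cycle of G - C meets F: a cycle entering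
   a tree T of G[F] has to leave it again, which takes two distinct edges between
   T and G - (C ∪ F), whereas there is at most one.  Hence, if Z is a feedback
   vertex set of G[W - (C ∪ F)], then Z ∪ (C ∩ W) is one of G[W].  For W = V(G)
   this gives (i).  For the minimum feedback vertex set Ĉ of G[Ĉ ∪ F̂], (Ĉ, F̂)
   an antler, it gives |Ĉ ∩ (C ∪ F)| <= |C ∩ (Ĉ ∪ F̂)|, hence equality by
   symmetry; the same bound then shows that Ĉ - (C ∪ F) remains a minimum
   feedback vertex set both of G[(Ĉ ∪ F̂) - (C ∪ F)] and of the certificate
   restricted to the vertices outside C ∪ F. *)

From mathcomp Require Import all_boot zify.
(* Imported after MathComp so that [comp] denotes the connected component of
   Defs rather than function composition. *)
From Pilot Require Import Defs.
Set Implicit Arguments. Unset Strict Implicit. Unset Printing Implicit Defensive.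

Ltac subset_by_cases :=
  apply/subsetP => ?; rewrite !inE;
  repeat match goal with |- context [?z \in ?A] => case: (z \in A) end; done.

Lemma cycle_exit (T : eqType) (P : pred T) (s : seq T) x y :
  uniq s -> x \in s -> P x -> y \in s -> ~~ P y ->
  exists2 a, a \in s & P a && ~~ P (next s a).
Proof.
move=> us xs Px ys nPy.
have [/hasP //|/hasPn noexit] := boolP (has (fun a => P a && ~~ P (next s a)) s).
have imp_tr : transitive (fun a b => P a ==> P b).
  by move=> b a c /implyP ab /implyP bc; apply/implyP => /ab /bc.
have : cycle (fun a b => P a ==> P b) s.
  by apply: cycle_from_next => // a /noexit; case: (P a); case: (P _).
rewrite cycle_all2rel // => /allrelP /(_ x y xs ys).
by rewrite Px (negbTE nPy).
Qed.

Lemma next_next_neq (T : eqType) (s : seq T) x :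
  uniq s -> 2 < size s -> x \in s -> next s (next s x) != x.
Proof.
move=> us ss xs; have [i s' def_s] := rot_to xs.
rewrite -!(next_rot i us) def_s.
have : uniq (x :: s') by rewrite -def_s rot_uniq.
have : 2 < size (x :: s') by rewrite -def_s size_rot.
case: s' {def_s} => [|y [|w r]] //= _.
rewrite !inE !negb_or => /and3P [/and3P [xy xw _] _ _].
by rewrite eqxx [y == x]eq_sym (negbTE xy) eqxx eq_sym.
Qed.

Section Multigraph.
Variable V : finType.
Implicit Types (m : V -> V -> nat) (A B C F U W X Y Z : {set V}).

Lemma has_cycle_mono m1 m2 A B : A \subset B ->
  {in A &, forall x y, m1 x y <= m2 x y} -> has_cycle m1 A -> has_cycle m2 B.
Proof.
move=> /subsetP sAB le_m [[x xA loop]|[[x [y [xA yA nxy mxy]]]|[s [ss us sA cs]]]].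
- by left; exists x; [exact: sAB | exact: leq_trans loop (le_m _ _ xA xA)].
- right; left; exists x, y; split; rewrite ?sAB //.
  exact: leq_trans mxy (le_m _ _ xA yA).
- right; right; exists s; split => //.
    by apply/allP => z zs; rewrite sAB ?(allP sA).
  apply: (cycle_from_next us) => z zs; have zA := allP sA z zs.
  have nzA : next s z \in A by rewrite (allP sA) ?mem_next.
  exact: leq_trans (next_cycle cs zs) (le_m _ _ zA nzA).
Qed.

Lemma has_cycle_subset m A B : A \subset B -> has_cycle m A -> has_cycle m B.
Proof. by move=> sAB; apply: has_cycle_mono. Qed.

Lemma is_fvs_setI m W U X : is_fvs m W X -> U \subset W -> is_fvs m U (X :&: U).
Proof.
move=> [_ acX] sUW; split; first exact: subsetIr.
by apply: contra_not acX; apply: has_cycle_subset; rewrite setDIr setDv setU0 setSD.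
Qed.

Definition restrict m W : V -> V -> nat :=
  fun x y => if (x \in W) && (y \in W) then m x y else 0.

Lemma restrict_le m W x y : restrict m W x y <= m x y.
Proof. by rewrite /restrict; case: ifP. Qed.

Lemma restrict_sym m W :
  (forall x y, m x y = m y x) -> forall x y, restrict m W x y = restrict m W y x.
Proof. by move=> msym x y; rewrite /restrict andbC msym. Qed.

Lemma is_fvs_restrict m W X : is_fvs (restrict m W) W X <-> is_fvs m W X.
Proof.
have eq_m : {in W :\: X &, forall x y, restrict m W x y = m x y}.
  by move=> x y /setDP [xW _] /setDP [yW _]; rewrite /restrict xW yW.
split=> -[sXW acX]; split=> // hc; apply: acX;
  by apply: has_cycle_mono hc => // x y xW yW; rewrite eq_m.
Qed.

Lemma is_min_fvs_restrict m W X :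
  is_min_fvs (restrict m W) W X <-> is_min_fvs m W X.
Proof.
by split=> -[/is_fvs_restrict fvsX minX]; split=> // Y /is_fvs_restrict; apply: minX.
Qed.

Lemma comp_refl m W x : x \in comp m W x.
Proof. by rewrite inE connect0. Qed.

Lemma comp_subset m W x : x \in W -> comp m W x \subset W.
Proof.
move=> xW; apply/subsetP => y; rewrite inE => /connectP [p xp ->] {y}.
by elim: p x xW xp => //= y p IHp x _ /andP [/and3P [_ yW _]]; apply: IHp.
Qed.

Lemma comp_mono m1 m2 W1 W2 x : W1 \subset W2 ->
  (forall x y, m1 x y <= m2 x y) -> comp m1 W1 x \subset comp m2 W2 x.
Proof.
move=> /subsetP sW le_m; apply/subsetP => y; rewrite !inE.
apply: connect_sub => a b /and3P [aW bW ab]; apply: connect1.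
by rewrite /adjW !sW // (leq_trans ab).
Qed.

Lemma comp_closed m W x y z : x \in W -> y \in comp m W x -> z \in W ->
  0 < m y z -> z \in comp m W x.
Proof.
move=> xW yK zW myz; have yW := subsetP (comp_subset m xW) y yK.
by move: yK; rewrite !inE => /connect_trans; apply; apply: connect1; apply/and3P.
Qed.

Lemma has_cycle_comp m A : has_cycle m A ->
  exists2 v, v \in A & has_cycle m (A :&: comp m A v).
Proof.
move=> [[x xA loop]|[[x [y [xA yA nxy mxy]]]|[s [ss us sA cs]]]].
- by exists x => //; left; exists x; rewrite // inE xA comp_refl.
- exists x => //; right; left; exists x, y; rewrite !inE xA yA connect0.
  by split=> //; apply: connect1; rewrite /adjW xA yA (leq_trans _ mxy).
- case: s ss us sA cs => [//|x s] ss us sA cs.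
  have xA : x \in A by rewrite (allP sA) ?mem_head.
  exists x => //; right; right; exists (x :: s); split => //.
  have /path_connect xs : path (adjW m A) x s.
    have : cycle (adjW m A) (x :: s).
      apply: (cycle_from_next us) => z zs.
      by rewrite /adjW !(allP sA) ?mem_next ?(next_cycle cs zs).
    by rewrite /= rcons_path => /andP [].
  by apply/allP => z zs; rewrite !inE (allP sA) ?xs.
Qed.

Lemma mem_comp_connected m W x y z : (forall x y, m x y = m y x) ->
  z \in comp m W y -> (y \in comp m W x) = (z \in comp m W x).
Proof.
move=> msym; rewrite !inE => yz; apply: same_connect_r yz x.
by apply: sym_connect_sym => a b; rewrite /adjW msym andbCA.
Qed.

Lemma min_fvs_comp m W X x : (forall x y, m x y = m y x) ->
  is_min_fvs m W X -> x \in W -> fvs_eq m (comp m W x) #|X :&: comp m W x|.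
Proof.
move=> msym [fvsX minX] xW; set K := comp m W x.
have sKW : K \subset W := comp_subset m xW.
split.
  by exists (X :&: K); split; first exact: is_fvs_setI fvsX sKW.
move=> Z [sZK acZ]; case: (fvsX) => sXW acX.
suff /minX : is_fvs m W ((X :\: K) :|: Z).
  have := leq_of_leqif (leq_card_setU (X :\: K) Z); have := cardsID K X; lia.
split; first by rewrite subUset (subset_trans (subsetDl X K) sXW) (subset_trans sZK).
set A := W :\: _ => /has_cycle_comp [v vA hc].
have sAW : A \subset W := subsetDl _ _.
have sameK w : w \in A :&: comp m A v -> (w \in K) = (v \in K).
  case/setIP=> _ /(subsetP (comp_mono v sAW (fun _ _ => leqnn _))) wv.
  by rewrite (mem_comp_connected x msym wv).
have [vK|vNK] := boolP (v \in K).
- apply: acZ; apply: has_cycle_subset hc; apply/subsetP => w wc.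
  have /setIP [/setDP [_ wNin] _] := wc.
  rewrite in_setD (sameK w wc) vK andbT; apply: contra wNin => wZ.
  by rewrite in_setU wZ orbT.
- apply: acX; apply: has_cycle_subset hc; apply/subsetP => w wc.
  have /setIP [/setDP [wW wNin] _] := wc.
  rewrite in_setD wW andbT; apply: contra wNin => wX.
  by rewrite in_setU in_setD wX (sameK w wc) (negbTE vNK).
Qed.

Lemma e_betweenE m A B :
  e_between m A B = \sum_(p | (p.1 \in A) && (p.2 \in B)) m p.1 p.2.
Proof. exact: pair_big_dep. Qed.

Lemma e_between_mono m A A' B B' : A \subset A' -> B \subset B' ->
  e_between m A B <= e_between m A' B'.
Proof.
move=> /subsetP sA /subsetP sB; rewrite !e_betweenE.
apply: sub_le_big => [//|? ?|[a b] /andP [/sA -> /sB ->] //]; exact: leq_addr.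
Qed.

Lemma leq_e_between m A B a b : a \in A -> b \in B -> m a b <= e_between m A B.
Proof. by move=> aA bB; rewrite e_betweenE (bigD1 (a, b)) ?aA ?bB //= leq_addr. Qed.

Lemma e_between_gt1 m A B a b a' b' :
  a \in A -> b \in B -> a' \in A -> b' \in B -> (a, b) != (a', b') ->
  0 < m a b -> 0 < m a' b' -> 1 < e_between m A B.
Proof.
move=> aA bB aA' bB' ne pos pos'.
rewrite e_betweenE (bigD1 (a, b)) ?aA ?bB //= (bigD1 (a', b')) /=; last first.
  by rewrite aA' bB' eq_sym ne.
lia.
Qed.

Lemma antler_min_fvs m W C F : antler m W C F -> is_min_fvs m (C :|: F) C.
Proof.
move=> [[_ _ _ acF _] minC]; split=> //; split; first exact: subsetUl.
by apply: contra_not acF; apply: has_cycle_subset; rewrite setDUl setDv set0U subsetDl.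
Qed.

Lemma fvc_setD m W Y C F : fvc m W C F -> fvc m (W :\: Y) (C :\: Y) (F :\: Y).
Proof.
move=> [sCW sFW dCF acF exitF]; split; rewrite ?setSD //.
- exact: disjointWl (subsetDl C Y) (disjointWr (subsetDl F Y) dCF).
- by apply: contra_not acF; apply: has_cycle_subset; apply: subsetDl.
- move=> x /setDP [xF _]; apply: leq_trans (exitF x xF); apply: e_between_mono.
    exact: comp_mono (subsetDl F Y) (fun _ _ => leqnn _).
  by subset_by_cases.
Qed.

Section FeedbackVertexCut.
Variables (m : V -> V -> nat) (C F : {set V}).
Hypotheses (msym : forall x y, m x y = m y x) (CF_fvc : fvc m [set: V] C F).

Let acyclicF : acyclic m F. Proof. by case: CF_fvc. Qed.

Let tree_exits x : x \in F ->
  e_between m (comp m F x) ([set: V] :\: (C :|: F)) <= 1.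
Proof. by case: CF_fvc => _ _ _ _; apply. Qed.

Lemma fvc_edge_outside x t o : x \in F -> t \in comp m F x -> o \notin C ->
  o \notin comp m F x -> 0 < m t o -> o \in [set: V] :\: (C :|: F).
Proof.
move=> xF tT oC oT pos; rewrite in_setD in_setU (negbTE oC) in_setT andbT.
by apply: contra oT => oF; apply: comp_closed tT oF pos.
Qed.

Lemma fvc_double_edge_notin x y : x \notin C -> y \notin C -> x != y -> 1 < m x y ->
  x \notin F.
Proof.
move=> xC yC nxy mxy; apply/negP => xF.
have [yF|yNF] := boolP (y \in F); first by apply: acyclicF; right; left; exists x, y.
have yO : y \in [set: V] :\: (C :|: F).
  by rewrite in_setD in_setU (negbTE yC) (negbTE yNF) in_setT.
have := leq_e_between m (comp_refl m F x) yO; have := tree_exits xF; lia.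
Qed.

Lemma fvc_cycle_notin s : uniq s -> 2 < size s -> all [pred v | v \notin C] s ->
  cycle (fun x y => 0 < m x y) s -> ~~ has (mem F) s.
Proof.
move=> us ss sC cs; apply/hasP => -[x xs xF]; set T := comp m F x.
have [sT|/allPn [y ys yT]] := boolP (all (mem T) s).
  apply: acyclicF; right; right; exists s; split => //.
  by apply/allP => z /(allP sT); apply: (subsetP (comp_subset m xF)).
have [a aS /andP [aT naT]] := cycle_exit us xs (comp_refl m F x) ys yT.
have xT : ~~ predC (mem T) x by rewrite /= negbK comp_refl.
have [b bS /= /andP [bT /negbNE nbT]] := cycle_exit us ys yT xs xT.
have pa : 0 < m a (next s a) := next_cycle cs aS.
have pb : 0 < m (next s b) b by rewrite msym; apply: next_cycle cs bS.
have naC : next s a \notin C by apply: (allP sC); rewrite mem_next.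
have naO := fvc_edge_outside xF aT naC naT pa.
have bO := fvc_edge_outside xF nbT (allP sC _ bS) bT pb.
have ne : (a, next s a) != (next s b, b).
  rewrite xpair_eqE; apply/negP => /andP [/eqP ab /eqP nab].
  by have := next_next_neq us ss bS; rewrite -ab nab eqxx.
by have := leq_trans (e_between_gt1 aT naO nbT bO ne pa pb) (tree_exits xF).
Qed.

Lemma fvc_has_cycle_setD m' A : (forall x y, m' x y <= m x y) ->
  has_cycle m' (A :\: C) -> has_cycle m' (A :\: (C :|: F)).
Proof.
rewrite -setDDl => le_m'.
have : {in A :\: C, forall z, z \notin C} by move=> z /setDP [].
move: (A :\: C) => B BC.
case=> [[x xB loop]|[[x [y [xB yB nxy mxy]]]|[s [ss us sB cs]]]].
- left; exists x; rewrite // in_setD xB andbT; apply/negP => xF.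
  by apply: acyclicF; left; exists x; rewrite // (leq_trans loop).
- have mxy' : 1 < m x y := leq_trans mxy (le_m' x y).
  have xF := fvc_double_edge_notin (BC x xB) (BC y yB) nxy mxy'.
  have yF : y \notin F.
    by apply: fvc_double_edge_notin (BC y yB) (BC x xB) _ _; rewrite 1?eq_sym // msym.
  by right; left; exists x, y; rewrite !in_setD xF yF xB yB.
- have sC : all [pred v | v \notin C] s by apply/allP => z /(allP sB) /BC.
  have cs_m : cycle (fun x y => 0 < m x y) s.
    by apply: sub_cycle cs => a b mab; apply: leq_trans mab (le_m' a b).
  have /hasPn sF := fvc_cycle_notin us ss sC cs_m.
  right; right; exists s; split => //.
  by apply/allP => z zs; rewrite in_setD sF ?(allP sB).
Qed.

Lemma fvs_extend m' W Z : (forall x y, m' x y <= m x y) ->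
  is_fvs m' (W :\: (C :|: F)) Z -> is_fvs m' W (Z :|: C :&: W).
Proof.
move=> le_m' [sZ acZ]; split.
  by rewrite subUset subsetIr (subset_trans sZ (subsetDl _ _)).
move=> hc; apply: acZ.
have /(fvc_has_cycle_setD le_m') : has_cycle m' ((W :\: Z) :\: C).
  by apply: has_cycle_subset hc; subset_by_cases.
by apply: has_cycle_subset; subset_by_cases.
Qed.

Lemma min_fvs_le_extend m' W X Z : (forall x y, m' x y <= m x y) ->
  is_min_fvs m' W X -> is_fvs m' (W :\: (C :|: F)) Z -> #|X| <= #|Z| + #|C :&: W|.
Proof.
move=> le_m' [_ minX] /(fvs_extend le_m') /minX.
by have := leq_of_leqif (leq_card_setU Z (C :&: W)); lia.
Qed.

Lemma min_fvs_setD m' W X : (forall x y, m' x y <= m x y) ->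
  is_min_fvs m' W X -> #|C :&: W| <= #|X :&: (C :|: F)| ->
  is_min_fvs m' (W :\: (C :|: F)) (X :\: (C :|: F)).
Proof.
move=> le_m' minX le_CW; have [[sXW acX] _] := minX; split.
  split; first exact: setSD.
  by apply: contra_not acX; apply: has_cycle_subset; subset_by_cases.
by move=> Z /(min_fvs_le_extend le_m' minX); have := cardsID (C :|: F) X; lia.
Qed.

Lemma antler_overlap_le Ch Fh : antler m [set: V] Ch Fh ->
  #|Ch :&: (C :|: F)| <= #|C :&: (Ch :|: Fh)|.
Proof.
move=> hA; have [[_ _ _ acFh _] _] := hA.
have : is_fvs m ((Ch :|: Fh) :\: (C :|: F)) (Ch :\: (C :|: F)).
  split; first exact/setSD/subsetUl.
  by apply: contra_not acFh; apply: has_cycle_subset; subset_by_cases.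
move=> /(min_fvs_le_extend (fun _ _ => leqnn _) (antler_min_fvs hA)).
by have := cardsID (C :|: F) Ch; lia.
Qed.

Lemma certificate_setD mH VH W X z : subgraph mH VH m W ->
  certificate mH VH X -> cert_order mH VH X z ->
  #|C :&: VH| <= #|X :&: (C :|: F)| ->
  [/\ subgraph (restrict mH (VH :\: (C :|: F))) (VH :\: (C :|: F))
                m (W :\: (C :|: F)),
      certificate (restrict mH (VH :\: (C :|: F))) (VH :\: (C :|: F))
                  (X :\: (C :|: F)) &
      cert_order (restrict mH (VH :\: (C :|: F))) (VH :\: (C :|: F))
                 (X :\: (C :|: F)) z].
Proof.
move=> [sVW symH leH _] [sXV minX] ordX le_CV.
have minX' : is_min_fvs (restrict mH (VH :\: (C :|: F))) (VH :\: (C :|: F))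
                       (X :\: (C :|: F)).
  exact/is_min_fvs_restrict/min_fvs_setD.
split.
- split; first exact: setSD.
  + exact: restrict_sym.
  + by move=> x y; apply: leq_trans (restrict_le _ _ _ _) (leH x y).
  + by move=> x y; rewrite /restrict; case: ifP => [/andP [] //|]; rewrite ltnn.
- by split; first exact: setSD.
- move=> x xV'; split; first exact: min_fvs_comp (restrict_sym _ symH) minX' xV'.
  apply: leq_trans (proj2 (ordX x _)); last by case/setDP: xV'.
  apply/subset_leq_card/setISS; first exact: subsetDl.
  exact: comp_mono (subsetDl _ _) (restrict_le mH _).
Qed.

End FeedbackVertexCut.

Lemma antler_overlap m C F Ch Fh : (forall x y, m x y = m y x) ->
  antler m [set: V] C F -> antler m [set: V] Ch Fh ->
  #|Ch :&: (C :|: F)| = #|C :&: (Ch :|: Fh)|.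
Proof.
move=> msym hA hAh; apply/eqP; rewrite eqn_leq.
by rewrite (antler_overlap_le msym hA.1 hAh) (antler_overlap_le msym hAh.1 hA).
Qed.

Lemma min_fvs_antler_setU m C F S : (forall x y, m x y = m y x) ->
  antler m [set: V] C F -> is_min_fvs m (~: (C :|: F)) S ->
  is_min_fvs m [set: V] (C :|: S).
Proof.
move=> msym [CF_fvc minC] [fvsS minS]; split.
  rewrite -setTD in fvsS.
  by have := fvs_extend msym CF_fvc (fun _ _ => leqnn _) fvsS; rewrite setIT setUC.
move=> X fvsX.
have /minC leC := is_fvs_setI fvsX (subsetT (C :|: F)).
have /minS leS := is_fvs_setI fvsX (subsetT (~: (C :|: F))).
have := leq_of_leqif (leq_card_setU C S); have := cardsID (C :|: F) X.
by rewrite setDE; lia.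
Qed.

Lemma antler_setD m C F Ch Fh : (forall x y, m x y = m y x) ->
  antler m [set: V] C F -> antler m [set: V] Ch Fh ->
  antler m (~: (C :|: F)) (Ch :\: (C :|: F)) (Fh :\: (C :|: F)).
Proof.
move=> msym hA hAh; split; first by rewrite -setTD; apply: fvc_setD; case: hAh.
move=> Z; rewrite -setDUl.
move=> /(min_fvs_le_extend msym hA.1 (fun _ _ => leqnn _) (antler_min_fvs hAh)).
by rewrite -(antler_overlap msym hA hAh); have := cardsID (C :|: F) Ch; lia.
Qed.

Lemma z_antler_setD m z C F Ch Fh : (forall x y, m x y = m y x) ->
  antler m [set: V] C F -> z_antler m [set: V] z Ch Fh ->
  z_antler m (~: (C :|: F)) z (Ch :\: (C :|: F)) (Fh :\: (C :|: F)).
Proof.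
move=> msym hA [hAh [mH [VH [subH certH ordH]]]].
split; first exact: antler_setD.
exists (restrict mH (VH :\: (C :|: F))), (VH :\: (C :|: F)).
rewrite -setDUl; apply: (certificate_setD msym hA.1 subH certH ordH).
rewrite (antler_overlap msym hA hAh); apply/subset_leq_card/setIS.
by case: subH.
Qed.

End Multigraph.

Theorem lemma20 (V : finType) (m : V -> V -> nat)
  (msym : forall x y, m x y = m y x) (C F : {set V})
  (hA : antler m [set: V] C F) :
  (forall S' : {set V}, is_min_fvs m (~: (C :|: F)) S' ->
     is_min_fvs m [set: V] (C :|: S')) /\
  (forall (z : nat) (Ch Fh : {set V}), z_antler m [set: V] z Ch Fh ->
     exists C' F' : {set V},
       [/\ z_antler m (~: (C :|: F)) z C' F',
           C' :|: F' = (Ch :|: Fh) :&: ~: (C :|: F) &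
           #|C'| + #|(Ch :|: Fh) :&: C| = #|Ch| ]).
Proof.
split=> [S'|z Ch Fh hzA]; first exact: min_fvs_antler_setU.
exists (Ch :\: (C :|: F)), (Fh :\: (C :|: F)); split.
- exact: z_antler_setD.
- by rewrite -setDUl setDE.
- have [hAh _] := hzA.
  by rewrite setIC -(antler_overlap msym hA hAh) addnC cardsID.
Qed.
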